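(* Let $n=2p_1^{J_1}\cdots p_s^{J_s}$, where $s\ge2$, the $p_i$ are distinct odd primes, $J_i\ge1$, and $\prod_{i=1}^r p_i^{J_i}<p_{r+1}$ for every $r\in\{1,\dots,s-1\}$. Let $\mathcal{D}_1,\mathcal{D}_2$ be sets of positive divisors of $n$ such that (1) $\sum_{d\in\mathcal{D}_1,\,d\text{ odd}}\phi(n/d)=\sum_{d\in\mathcal{D}_2,\,d\text{ odd}}\phi(n/d)$, and (2) $\sum_{d\in\mathcal{D}_1,\,d\text{ even}}\phi(n/d)=\sum_{d\in\mathcal{D}_2,\,d\text{ even}}\phi(n/d)$. Then $\mathcal{D}_1=\mathcal{D}_2$.
   Context: $\phi$ is Euler's totient function. *)

From mathcomp Require Import all_boot.
Set Implicit Arguments.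
Unset Strict Implicit.
Unset Printing Implicit Defensive.

Definition phisum (n : nat) (D : pred nat) (b : bool) : nat :=
  \sum_(d <- divisors n | D d && (odd d == b)) totient (n %/ d).

From mathcomp Require Import all_boot zify.
From mathcomp Require Import cyclic.

(* Write n = 2 m with m odd.  Odd divisors of n are the m %/ f and even ones
   the 2 (m %/ f), for f | m, and in both cases phi (n %/ d) = phi f, so each
   hypothesis compares two subset sums of the weights phi f, f | m.  The growth
   condition on the primes makes these weights superincreasing: every phi f
   exceeds the sum of phi over the smaller divisors of m.  This is proved by
   adjoining one prime power q ^ K at a time, using that q exceeds m + 1.
   Superincreasing weights have distinct subset sums, hence D1 = D2. *)

Definition superincreasing_on (s : seq nat) (w : nat -> nat) :=
  forall x, x \in s -> \sum_(y <- s | y < x) w y < w x.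

Lemma superincreasing_subset_sum_eq [s : seq nat] [w : nat -> nat]
    [A B : pred nat] :
  sorted ltn s -> superincreasing_on s w ->
  \sum_(y <- s | A y) w y = \sum_(y <- s | B y) w y -> {in s, A =1 B}.
Proof.
elim/last_ind: s => [|s x IHs] // s_sorted s_super.
have /andP[x_max s_sorted'] : all (ltn^~ x) s && sorted ltn s.
  move: s_sorted; rewrite -rev_sorted rev_rcons /= => x_path.
  rewrite -rev_sorted (path_sorted x_path) andbT -all_rev.
  by apply: order_path_min x_path => a b c /= ba cb; apply: ltn_trans cb ba.
have sum_below_x y : y \in s -> \sum_(z <- rcons s x | z < y) w z
                                  = \sum_(z <- s | z < y) w z.
  by move=> /(allP x_max) xy; rewrite big_rcons ltnNge (ltnW xy) /= addn0.
have s_super' : superincreasing_on s w.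
  by move=> y ys; rewrite -sum_below_x //; apply: s_super; rewrite mem_rcons inE ys orbT.
have sum_lt_wx : \sum_(y <- s) w y < w x.
  have := s_super x; rewrite mem_rcons mem_head big_rcons ltnn /= addn0 => /(_ isT).
  by rewrite -big_filter (all_filterP x_max).
have sum_le P : \sum_(y <- s | P y) w y <= \sum_(y <- s) w y.
  by rewrite big_mkcond leq_sum // => i _; case: (P i).
rewrite !big_rcons => sumAB.
have AxBx : A x = B x.
  by move: sumAB (sum_le A) (sum_le B); case: (A x); case: (B x) => /=; lia.
have sumAB' : \sum_(y <- s | A y) w y = \sum_(y <- s | B y) w y.
  by move: sumAB; rewrite AxBx; case: (B x) => /=; lia.
by move=> y; rewrite mem_rcons inE => /orP[/eqP-> // | ]; apply: IHs.
Qed.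

Lemma sum_totient_divisors N : 0 < N -> \sum_(d <- divisors N) totient d = N.
Proof.
move=> N_gt0; rewrite -{2}(sum_totient_dvd N) -(big_mkord (fun d => d %| N)).
rewrite /index_iota subn0 -[RHS]big_filter; apply/perm_big/uniq_perm.
- exact: divisors_uniq.
- by rewrite filter_uniq ?iota_uniq.
move=> d; rewrite mem_filter mem_iota -dvdn_divisors //.
by case: (boolP (d %| N)) => dN; rewrite ?andbF //= add0n ltnS dvdn_leq.
Qed.

Lemma sum_le_sum_subseq (s t : seq nat) (P : pred nat) (F : nat -> nat) :
  uniq s -> uniq t -> {subset [seq y <- s | P y] <= t} ->
  \sum_(y <- s | P y) F y <= \sum_(y <- t) F y.
Proof.
move=> s_uniq t_uniq sub_st.
apply: (uniq_sub_le_big_cond leqnn (fun x y => leq_addr y x)); rewrite ?filter_uniq //.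
by move=> y /sub_st; rewrite filter_predT.
Qed.

Lemma divn_divn_id [m d : nat] : 0 < m -> d %| m -> m %/ (m %/ d) = d.
Proof. by move=> m_gt0 dm; rewrite divnA // mulKn. Qed.

Lemma dvdn_mul_pfactor_decomp [m q K y : nat] :
  prime q -> coprime m q -> 0 < m -> y %| m * q ^ K ->
  exists2 b, b %| m & exists2 j, j <= K & y = b * q ^ j.
Proof.
move=> q_prime mq_coprime m_gt0 y_dvd.
have qK_gt0 : 0 < q ^ K by rewrite expn_gt0 prime_gt0.
have M_gt0 : 0 < m * q ^ K by rewrite muln_gt0 m_gt0.
have [b qb_coprime yE] := pfactor_coprime q_prime (dvdn_gt0 M_gt0 y_dvd).
exists b; last exists (logn q y) => //.
  have : b %| m * q ^ K by apply: dvdn_trans y_dvd; rewrite yE dvdn_mulr.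
  by rewrite Gauss_dvdl // coprimeXr // coprime_sym.
have logM : logn q (m * q ^ K) = K.
  by rewrite lognM // logn_coprime ?pfactorK // coprime_sym.
rewrite -{1}logM -(pfactor_dvdn _ q_prime M_gt0).
exact: dvdn_trans (pfactor_dvdnn q y) y_dvd.
Qed.

Lemma eq_exp_of_bounds q b j k :
  0 < b < q -> q ^ k <= b * q ^ j < q ^ k.+1 -> j = k.
Proof.
case/andP=> b_gt0 bq /andP[lo hi]; have q_gt1 : 1 < q by apply: leq_ltn_trans bq.
apply/eqP; rewrite eqn_leq -[j <= k]ltnS -[k <= j]ltnS.
rewrite -(ltn_exp2l j k.+1 q_gt1) -(ltn_exp2l k j.+1 q_gt1).
rewrite (leq_ltn_trans (leq_pmull _ b_gt0) hi) /=.
by rewrite (leq_ltn_trans lo) // expnS ltn_pmul2r // expn_gt0 ltnW.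
Qed.

Section AdjoinPrimePower.

Variables (m q K : nat).
Hypotheses (m_gt0 : 0 < m) (q_prime : prime q) (m1_lt_q : m.+1 < q).

Let q_gt0 : 0 < q. Proof. exact: prime_gt0. Qed.

Let mq_coprime : coprime m q.
Proof. by rewrite coprime_sym prime_coprime //; apply/negP=> /(dvdn_leq m_gt0); lia. Qed.

Let M_gt0 : 0 < m * q ^ K.
Proof. by rewrite muln_gt0 m_gt0 expn_gt0 q_gt0. Qed.

Let divisor_lt_q [b] : b %| m -> 0 < b < q.
Proof. by move=> bm; have := dvdn_leq m_gt0 bm; rewrite (dvdn_gt0 m_gt0 bm); lia. Qed.

Lemma sum_totient_divisors_below_pfactor k :
  \sum_(y <- divisors (m * q ^ K) | y < q ^ k) totient y < totient (q ^ k).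
Proof.
case: k => [|k]; rewrite ?expn0.
  rewrite big1_seq // => y /andP[]; rewrite ltnS leqn0 => /eqP-> .
  by rewrite -dvdn_divisors // dvd0n gtn_eqF.
have N_gt0 : 0 < m * q ^ k by rewrite muln_gt0 m_gt0 expn_gt0 q_gt0.
rewrite totient_pfactor //=; apply: (@leq_ltn_trans (m * q ^ k)).
  rewrite -[X in _ <= X](sum_totient_divisors _ N_gt0).
  apply: sum_le_sum_subseq; rewrite ?divisors_uniq // => y.
  rewrite mem_filter -!dvdn_divisors // => /andP[y_lt y_dvd].
  have [b bm [j _ yE]] := dvdn_mul_pfactor_decomp q_prime mq_coprime m_gt0 y_dvd.
  have /andP[b_gt0 _] := divisor_lt_q bm.
  have jk : j <= k.
    rewrite -ltnS -(ltn_exp2l j k.+1 (prime_gt1 q_prime)).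
    by apply: leq_ltn_trans y_lt; rewrite yE leq_pmull.
  by rewrite yE dvdn_mul // dvdn_exp2l.
by rewrite ltn_pmul2r ?expn_gt0 ?q_gt0 //; lia.
Qed.

Lemma perm_divisors_between_pfactors [a k : nat] : a %| m -> k <= K ->
  perm_eq [seq y <- divisors (m * q ^ K) | (y < a * q ^ k) && ~~ (y < q ^ k)]
          [seq b * q ^ k | b <- divisors m & b < a].
Proof.
move=> am kK; have qk_gt0 : 0 < q ^ k by rewrite expn_gt0 q_gt0.
apply: uniq_perm; rewrite ?filter_uniq ?divisors_uniq //.
  rewrite map_inj_uniq ?filter_uniq ?divisors_uniq // => b1 b2 /eqP.
  by rewrite eqn_pmul2r // => /eqP.
move=> y; rewrite mem_filter -dvdn_divisors //; apply/idP/mapP.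
  case/andP=> /andP[y_lt]; rewrite -leqNgt => y_ge y_dvd.
  have [b bm [j _ yE]] := dvdn_mul_pfactor_decomp q_prime mq_coprime m_gt0 y_dvd.
  have /andP[_ aq] := divisor_lt_q am.
  have jk : j = k.
    apply: eq_exp_of_bounds (divisor_lt_q bm) _.
    by rewrite -yE y_ge (leq_trans y_lt) // expnS leq_pmul2r // ltnW.
  rewrite {}yE {}jk in y_lt *; exists b => //.
  by rewrite mem_filter -dvdn_divisors // bm andbT -(ltn_pmul2r qk_gt0).
case=> b; rewrite mem_filter -dvdn_divisors // => /andP[ba bm] ->.
have /andP[b_gt0 _] := divisor_lt_q bm.
by rewrite ltn_pmul2r // ba -leqNgt leq_pmull // dvdn_mul // dvdn_exp2l.
Qed.

Lemma superincreasing_mul_pfactor :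
  superincreasing_on (divisors m) totient ->
  superincreasing_on (divisors (m * q ^ K)) totient.
Proof.
move=> m_super x; rewrite -dvdn_divisors // => x_dvd.
have [a am [k kK ->]] := dvdn_mul_pfactor_decomp q_prime mq_coprime m_gt0 x_dvd.
have coprime_qk b : b %| m -> coprime b (q ^ k).
  by move=> bm; rewrite coprimeXr // (coprime_dvdl bm).
rewrite (bigID (fun y => y < q ^ k)) /= totient_coprime ?coprime_qk //.
have small : \sum_(y <- divisors (m * q ^ K) | (y < a * q ^ k) && (y < q ^ k))
               totient y < totient (q ^ k).
  apply: leq_ltn_trans (sum_totient_divisors_below_pfactor k).
  by apply: (sub_le_big leqnn (fun x y => leq_addr y x)) => y /andP[].
have large : \sum_(y <- divisors (m * q ^ K) | (y < a * q ^ k) && ~~ (y < q ^ k))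
               totient y = (\sum_(b <- divisors m | b < a) totient b) * totient (q ^ k).
  rewrite -big_filter (perm_big _ (perm_divisors_between_pfactors am kK)) big_map.
  rewrite big_filter big_distrl /= big_seq_cond [RHS]big_seq_cond; apply: eq_bigr => b /andP[].
  by rewrite -dvdn_divisors // => bm _; rewrite totient_coprime ?coprime_qk.
have := m_super a; rewrite -dvdn_divisors // => /(_ am); nia.
Qed.

End AdjoinPrimePower.

Lemma prod_prefix_superincreasing [s : nat] [p J : nat -> nat] :
  (forall i, i < s -> prime (p i) /\ odd (p i)) ->
  (forall r, 1 <= r <= s - 1 -> \prod_(i < r) p i ^ J i < p r) ->
  forall r, r <= s ->
  [/\ 0 < \prod_(i < r) p i ^ J i, odd (\prod_(i < r) p i ^ J i)
    & superincreasing_on (divisors (\prod_(i < r) p i ^ J i)) totient].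
Proof.
move=> p_prime_odd p_growth; elim=> [|r IHr] rs.
  by rewrite big_ord0; split=> // x; rewrite inE => /eqP->; rewrite big_cons big_nil.
have [P_gt0 P_odd P_super] := IHr (ltnW rs).
have [pr_prime pr_odd] := p_prime_odd r rs.
have P_lt : \prod_(i < r) p i ^ J i < p r.
  case: r {IHr P_gt0 P_odd P_super} rs pr_prime pr_odd => [|r] rs pr_prime _.
    by rewrite big_ord0 prime_gt1.
  by apply: p_growth; lia.
have P1_lt : (\prod_(i < r) p i ^ J i).+1 < p r.
  by rewrite ltn_neqAle P_lt andbT; apply: contraTneq pr_odd => <-; rewrite /= P_odd.
rewrite big_ord_recr /= muln_gt0 P_gt0 expn_gt0 prime_gt0 //.
by rewrite oddM P_odd oddX pr_odd orbT; split=> //; apply: superincreasing_mul_pfactor.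
Qed.

Lemma totient_double_odd k : odd k -> totient (2 * k) = totient k.
Proof. by move=> k_odd; rewrite totient_coprime ?coprime2n // totient_prime // mul1n. Qed.

Lemma big_divisors_codivisor m (P : pred nat) (F : nat -> nat) : 0 < m ->
  \sum_(d <- divisors m | P d) F d = \sum_(f <- divisors m | P (m %/ f)) F (m %/ f).
Proof.
move=> m_gt0; rewrite -(big_map (fun f => m %/ f) P F).
apply/perm_big/uniq_perm; rewrite ?divisors_uniq //.
  rewrite map_inj_in_uniq ?divisors_uniq // => f1 f2.
  rewrite -!dvdn_divisors // => f1m f2m eq_div.
  by rewrite -(divn_divn_id m_gt0 f1m) eq_div divn_divn_id.
move=> d; rewrite -dvdn_divisors //; apply/idP/mapP => [dm | [f]].
  by exists (m %/ d); rewrite ?divn_divn_id // -dvdn_divisors // dvdn_div.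
by rewrite -dvdn_divisors // => fm ->; apply: dvdn_div.
Qed.

Lemma perm_odd_divisors_double [m : nat] : odd m ->
  perm_eq [seq d <- divisors (2 * m) | odd d] (divisors m).
Proof.
move=> m_odd; have m_gt0 := odd_gt0 m_odd.
apply: uniq_perm; rewrite ?filter_uniq ?divisors_uniq // => d.
rewrite mem_filter -!dvdn_divisors ?muln_gt0 //; apply/andP/idP => [[d_odd]|dm].
  by rewrite Gauss_dvdr // coprimen2.
by rewrite dvdn_mull // -coprimen2 (coprime_dvdl dm) // coprimen2.
Qed.

Lemma perm_even_divisors_double [m : nat] : odd m ->
  perm_eq [seq d <- divisors (2 * m) | ~~ odd d] [seq 2 * e | e <- divisors m].
Proof.
move=> m_odd; have m_gt0 := odd_gt0 m_odd.
apply: uniq_perm; rewrite ?filter_uniq ?divisors_uniq //.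
  by rewrite map_inj_uniq ?divisors_uniq // => e1 e2 /eqP; rewrite eqn_pmul2l // => /eqP.
move=> d; rewrite mem_filter -dvdn_divisors ?muln_gt0 //; apply/andP/mapP.
  case; rewrite -dvdn2 => /dvdnP[e ->]; rewrite mulnC dvdn_pmul2l // => em.
  by exists e; rewrite -?dvdn_divisors.
by case=> e; rewrite -dvdn_divisors // => em ->; rewrite oddM dvdn_pmul2l.
Qed.

Lemma phisum_double_odd m (D : pred nat) : odd m ->
  phisum (2 * m) D true = \sum_(f <- divisors m | D (m %/ f)) totient f.
Proof.
move=> m_odd; have m_gt0 := odd_gt0 m_odd.
rewrite /phisum (eq_bigl (fun d => odd d && D d)) => [|d]; last by rewrite eqb_id andbC.
rewrite -big_filter_cond (perm_big _ (perm_odd_divisors_double m_odd)).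
rewrite [LHS]big_divisors_codivisor // big_seq_cond [RHS]big_seq_cond.
apply: eq_bigr => f /andP[]; rewrite -dvdn_divisors // => fm _.
rewrite divnA // mulnAC mulnK // totient_double_odd //.
by rewrite -coprimen2 (coprime_dvdl fm) // coprimen2.
Qed.

Lemma phisum_double_even m (D : pred nat) : odd m ->
  phisum (2 * m) D false = \sum_(f <- divisors m | D (2 * (m %/ f))) totient f.
Proof.
move=> m_odd; have m_gt0 := odd_gt0 m_odd.
rewrite /phisum (eq_bigl (fun d => ~~ odd d && D d)) => [|d]; last by rewrite eqbF_neg andbC.
rewrite -big_filter_cond (perm_big _ (perm_even_divisors_double m_odd)) big_map.
rewrite [LHS]big_divisors_codivisor // big_seq_cond [RHS]big_seq_cond.
by apply: eq_bigr => f /andP[]; rewrite -dvdn_divisors // => fm _; rewrite divnMl // divn_divn_id.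
Qed.

Lemma codivisor_eq_in [m : nat] [P Q : pred nat] : 0 < m ->
  {in divisors m, forall f, P (m %/ f) = Q (m %/ f)} -> {in divisors m, P =1 Q}.
Proof.
move=> m_gt0 PQ d; rewrite -dvdn_divisors // => dm.
by rewrite -(divn_divn_id m_gt0 dm) PQ // -dvdn_divisors // dvdn_div.
Qed.

Lemma eq_in_divisors_double [m : nat] [P Q : pred nat] : odd m ->
  {in divisors m, P =1 Q} -> {in divisors m, forall e, P (2 * e) = Q (2 * e)} ->
  {in divisors (2 * m), P =1 Q}.
Proof.
move=> m_odd PQ PQ2 d d_in; case: (boolP (odd d)) => d_odd.
  by apply: PQ; rewrite -(perm_mem (perm_odd_divisors_double m_odd)) mem_filter d_odd.
have := perm_mem (perm_even_divisors_double m_odd) d.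
by rewrite mem_filter d_odd d_in => /esym/mapP[e e_in ->]; apply: PQ2.
Qed.

Theorem lemma3p5 (n s : nat) (p J : nat -> nat) (D1 D2 : pred nat) :
  2 <= s ->
  (forall i, i < s -> prime (p i) /\ odd (p i) /\ 1 <= J i) ->
  (forall i j, i < s -> j < s -> p i = p j -> i = j) ->
  (forall r, 1 <= r <= s - 1 -> \prod_(i < r) p i ^ J i < p r) ->
  n = 2 * \prod_(i < s) p i ^ J i ->
  {subset D1 <= divisors n} ->
  {subset D2 <= divisors n} ->
  phisum n D1 true = phisum n D2 true ->
  phisum n D1 false = phisum n D2 false ->
  D1 =i D2.
Proof.
move=> _ p_facts _ p_growth -> sub1 sub2.
have p_prime_odd i : i < s -> prime (p i) /\ odd (p i) by case/p_facts=> ? [].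
have [m_gt0 m_odd m_super] := prod_prefix_superincreasing p_prime_odd p_growth s (leqnn s).
set m := \prod_(i < s) p i ^ J i in sub1 sub2 m_gt0 m_odd m_super *.
rewrite !phisum_double_odd // !phisum_double_even // => sum_odd sum_even.
have odd_eq := codivisor_eq_in m_gt0
  (superincreasing_subset_sum_eq (sorted_divisors_ltn m) m_super sum_odd).
have even_eq := codivisor_eq_in (P := fun e => D1 (2 * e)) (Q := fun e => D2 (2 * e))
  m_gt0 (superincreasing_subset_sum_eq (sorted_divisors_ltn m) m_super sum_even).
move=> d; case: (boolP (d \in divisors (2 * m))) => [d_in | d_notin].
  exact: eq_in_divisors_double m_odd odd_eq even_eq d d_in.
by rewrite (contraNF (@sub1 d)) ?(contraNF (@sub2 d)).
Qed.
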